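(* For every positive integer $n$, \[ \overline{M}(n)=\sum_{d\mid n}\varphi(d)\sum_{\substack{\delta\mid n\\ \gcd(\delta,d)=1}}\mu(\delta)\sum_{\substack{1\le j\le n/\delta\\ \delta j\equiv 1 \ (\mathrm{mod}\ d)}} f\!\left(\left\lfloor \frac{n}{j\delta}\right\rfloor\right), \] where $d$ and $\delta$ run over the positive divisors of $n$, and for $d=1$ the congruence condition is vacuous.
   Context: For a nonempty finite set $A$ of positive integers, $(A)$ denotes the greatest common divisor of the elements of $A$. $\varphi$ is Euler's totient function and $\mu$ is the Möbius function. For $m\in\mathbb{N}$, $f(m)$ is the number of nonempty subsets $A\subseteq\{1,2,\ldots,m\}$ with $(A)=1$ (equivalently $f(m)=\sum_{d=1}^m\mu(d)(2^{\lfloor m/d\rfloor}-1)$). Define \[ \overline{M}(n)=\sum_{\substack{\emptyset\ne A\subseteq\{1,\ldots,n\}\\ \gcd((A),n)=1}}\gcd((A)-1,n), \] the sum over all nonempty subsets $A$ of $\{1,\ldots,n\}$ with $\gcd((A),n)=1$, with the convention $\gcd(0,n)=n$. *)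

From mathcomp Require Import all_boot all_order all_algebra.
Set Implicit Arguments. Unset Strict Implicit. Unset Printing Implicit Defensive.
Import GRing.Theory Num.Theory.
Local Open Scope ring_scope.

(* Moebius function, as an integer: 0 if n = 0 (unused) or n not squarefree,
   otherwise (-1)^(number of prime factors). *)
Definition mobius (n : nat) : int :=
  if (0 < n)%N && all (fun p => logn p n == 1%N) (primes n)
  then (-1) ^+ size (primes n) else 0.

(* gcd (A) of the set {i+1 | i in A} for A a subset of 'I_m, i.e. of {1..m}. *)
Definition setgcd (m : nat) (A : {set 'I_m}) : nat :=
  \big[gcdn/0%N]_(i in A) i.+1.

Definition f (m : nat) : nat :=
  #|[set A : {set 'I_m} | (A != set0) && (setgcd A == 1%N)]|.

(* Mbar(n) = sum over nonempty A subset of {1..n} with gcd((A),n)=1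
   of gcd((A)-1, n), with gcd(0,n) = n (which is gcdn's behaviour). *)
Definition Mbar (n : nat) : nat :=
  \sum_(A : {set 'I_n} | (A != set0) && coprime (setgcd A) n)
     gcdn (setgcd A).-1 n.

From mathcomp Require Import all_boot all_order all_algebra all_solvable.
Set Implicit Arguments. Unset Strict Implicit. Unset Printing Implicit Defensive.
Import GRing.Theory Num.Theory.
Local Open Scope ring_scope.

(* Group the nonempty subsets A of {1..n} by g = (A).
   Dividing by g is a bijection from the subsets with gcd exactly g onto
   the subsets of {1..n/g} with gcd 1, so there are f(n/g) of them, and
     Mbar(n) = sum_(1 <= g <= n) [g coprime n] gcd(g-1, n) f(n/g).
   Two classical divisor-sum identities finish the job:
     gcd(k, n) = sum_(d | n, d | k) phi(d)     (Gauss, via sum_totient_dvd)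
     [g coprime n] = sum_(delta | n, delta | g) mu(delta)  (Moebius inversion).
   Expanding gcd(g-1, n) and exchanging sums gives an outer sum over d | n
   of phi(d) times the sum over g = 1 mod d; expanding [g coprime n] and
   writing g = j * delta gives the inner sum of the theorem (delta | g and
   g = 1 mod d force delta to be coprime to d). *)

Lemma mobius1 : mobius 1 = 1.
Proof. by []. Qed.

Lemma mobius_sqr_dvd p m : prime p -> (0 < m)%N -> (p ^ 2 %| m)%N -> mobius m = 0.
Proof.
move=> p_pr m_gt0 p2m; rewrite /mobius; case: ifP => // /andP [_ /allP sqfree].
have pm : (p %| m)%N by apply: dvdn_trans p2m; rewrite expnS dvdn_mulr.
have /sqfree/eqP logp1 : p \in primes m by rewrite mem_primes p_pr m_gt0 pm.
by move: p2m; rewrite pfactor_dvdn // logp1.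
Qed.

Lemma mobius_primeM p m : prime p -> (0 < m)%N -> ~~ (p %| m)%N ->
  mobius (p * m) = - mobius m.
Proof.
move=> p_pr m_gt0 npm; have p_gt0 := prime_gt0 p_pr.
have p_primes : p \notin primes m by rewrite mem_primes p_pr m_gt0 (negbTE npm).
have primes_pm : perm_eq (primes (p * m)) (p :: primes m).
  apply: uniq_perm; rewrite /= ?p_primes ?primes_uniq //.
  by move=> q; rewrite primesM // primes_prime // !in_cons in_nil orbF.
rewrite /mobius muln_gt0 p_gt0 m_gt0 (perm_all _ primes_pm) (perm_size primes_pm) /=.
rewrite lognM // logn_prime // eqxx logn_coprime ?prime_coprime // addn0 eqxx /=.
have -> : all (fun q => logn q (p * m) == 1%N) (primes m) =
          all (fun q => logn q m == 1%N) (primes m).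
  apply: eq_in_all => q qm; rewrite lognM // logn_prime //.
  have qp : q != p by apply: contraNneq p_primes => <-.
  by rewrite (negbTE qp).
by case: ifP => _; rewrite ?oppr0 // exprS mulN1r.
Qed.

Lemma divisors_exact_prime p m : prime p -> (0 < m)%N -> (p %| m)%N ->
  perm_eq [seq d <- divisors m | (p %| d)%N && ~~ (p ^ 2 %| d)%N]
          [seq p * e | e <- [seq e <- divisors m | ~~ (p %| e)%N]]%N.
Proof.
move=> p_pr m_gt0 pm; have p_gt0 := prime_gt0 p_pr.
apply: uniq_perm; first exact/filter_uniq/divisors_uniq.
  rewrite map_inj_uniq; first exact/filter_uniq/divisors_uniq.
  by move=> a b /eqP; rewrite eqn_pmul2l // => /eqP.
move=> x; rewrite mem_filter -dvdn_divisors //; apply/idP/mapP.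
  case/andP => /andP [px np2x] xm; exists (x %/ p)%N; last by rewrite mulnC divnK.
  rewrite mem_filter -dvdn_divisors // (dvdn_trans (dvdn_div px) xm) andbT.
  by rewrite dvdn_divRL // mulnn.
case=> e; rewrite mem_filter -dvdn_divisors // => /andP [npe em] ->.
rewrite dvdn_mulr // -mulnn dvdn_pmul2l // npe /=.
by rewrite Gauss_dvd ?pm ?em // prime_coprime.
Qed.

(* The fundamental property of mu: its divisor sum is the indicator of 1.
   For m > 1 pick a prime p | m; divisors divisible by p^2 contribute 0 and
   those divisible by p exactly once cancel those prime to p. *)
Lemma sum_mobius_divisors m : (0 < m)%N ->
  \sum_(d <- divisors m) mobius d = (m == 1%N)%:R.
Proof.
move=> m_gt0; case: (ltngtP m 1) => [|m_gt1|->]; first by rewrite ltnNge m_gt0.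
  have p_pr := pdiv_prime m_gt1; have pm := pdiv_dvd m; set p := pdiv m in p_pr pm *.
  have d_gt0 d : d \in divisors m -> (0 < d)%N.
    by rewrite -dvdn_divisors // => /(dvdn_gt0 m_gt0).
  rewrite (bigID (fun d => p %| d)%N) /= (bigID (fun d => p ^ 2 %| d)%N) /=.
  rewrite big1_seq ?add0r; last first.
    by move=> d /andP [/andP [_ p2d] dm]; apply: mobius_sqr_dvd p2d; rewrite ?d_gt0.
  rewrite -big_filter (perm_big _ (divisors_exact_prime p_pr m_gt0 pm)).
  rewrite big_map big_filter -big_split /= big1_seq // => e /andP [npe em].
  by rewrite mobius_primeM ?d_gt0 // addNr.
by rewrite big_seq1 mobius1.
Qed.

Lemma divisors_dvd_filter n k : (0 < n)%N ->
  perm_eq [seq d <- divisors n | (d %| k)%N] (divisors (gcdn k n)).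
Proof.
move=> n_gt0; have g_gt0 : (0 < gcdn k n)%N by rewrite gcdn_gt0 n_gt0 orbT.
apply: uniq_perm; rewrite ?filter_uniq ?divisors_uniq // => d.
by rewrite mem_filter -!dvdn_divisors // dvdn_gcd andbC.
Qed.

Lemma sum_mobius_coprime n g : (0 < n)%N ->
  \sum_(delta <- divisors n | (delta %| g)%N) mobius delta = (coprime g n)%:Z.
Proof.
move=> n_gt0; rewrite -big_filter (perm_big _ (divisors_dvd_filter g n_gt0)).
by rewrite sum_mobius_divisors ?natz // gcdn_gt0 n_gt0 orbT.
Qed.

Lemma sum_totient_divisors N : (0 < N)%N ->
  (\sum_(d <- divisors N) totient d)%N = N.
Proof.
move=> N_gt0.
have divN : perm_eq (divisors N) [seq d <- index_iota 0 N.+1 | (d %| N)%N].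
  apply: uniq_perm; rewrite ?divisors_uniq ?filter_uniq ?iota_uniq // => d.
  rewrite mem_filter mem_index_iota -dvdn_divisors //.
  by case dN: (d %| N)%N; rewrite //= ltnS dvdn_leq.
by rewrite (perm_big _ divN) big_filter big_mkord sum_totient_dvd.
Qed.

Lemma gcdn_sum_totient n k : (0 < n)%N ->
  gcdn k n = (\sum_(d <- divisors n | (d %| k)%N) totient d)%N.
Proof.
move=> n_gt0; rewrite -big_filter (perm_big _ (divisors_dvd_filter k n_gt0)).
by rewrite sum_totient_divisors ?gcdn_gt0 ?n_gt0 ?orbT.
Qed.

Lemma setgcd_dvd n (A : {set 'I_n}) x : x \in A -> (setgcd A %| x.+1)%N.
Proof. by move=> xA; rewrite /setgcd (bigD1 x) //= dvdn_gcdl. Qed.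

Lemma setgcd_bounds n (A : {set 'I_n}) : A != set0 -> (1 <= setgcd A < n.+1)%N.
Proof.
case/set0Pn => x xA; have gx := setgcd_dvd xA.
have g_gt0 : (0 < setgcd A)%N by move: gx; case: (setgcd A); rewrite ?dvd0n.
by rewrite g_gt0 ltnS (leq_trans (dvdn_leq _ gx)) ?ltn_ord.
Qed.

Section ScaleByGcd.
Variables (n g : nat).
Hypothesis g_gt0 : (0 < g)%N.

Lemma scale_subproof (i : 'I_(n %/ g)) : ((g * i.+1).-1 < n)%N.
Proof.
have le_n : (i.+1 * g <= n)%N by rewrite -leq_divRL ?ltn_ord.
by rewrite prednK ?muln_gt0 ?g_gt0 // mulnC.
Qed.

Definition scale (i : 'I_(n %/ g)) : 'I_n := Ordinal (scale_subproof i).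

Lemma scale_val i : (scale i).+1 = (g * i.+1)%N.
Proof. by rewrite /= prednK // muln_gt0 g_gt0. Qed.

Lemma scale_inj : injective scale.
Proof.
move=> i j /(congr1 (fun x : 'I_n => (x : nat).+1)) /eqP.
by rewrite !scale_val eqn_pmul2l // eqSS => /eqP /val_inj.
Qed.

Lemma setgcd_scale (B : {set 'I_(n %/ g)}) : setgcd (scale @: B) = (g * setgcd B)%N.
Proof.
rewrite /setgcd big_imset /=; last by move=> ? ? _ _; apply: scale_inj.
under eq_bigr do rewrite scale_val.
by rewrite (big_morph (muln g) (muln_gcdr g) (muln0 g)).
Qed.

(* Every element of a set with gcd g is a multiple of g, so such a set is
   the image of its preimage. *)
Lemma scale_preimK (A : {set 'I_n}) : setgcd A = g -> scale @: (scale @^-1: A) = A.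
Proof.
move=> gA; apply/setP => x; apply/imsetP/idP => [[i] | xA]; first by rewrite inE => ? ->.
have /dvdnP [k xE] : (g %| x.+1)%N by rewrite -gA setgcd_dvd.
have k_gt0 : (0 < k)%N by move: xE; case: (k).
have k_le : (k.-1 < n %/ g)%N by rewrite prednK // leq_divRL // -xE ltn_ord.
have xE' : scale (Ordinal k_le) = x by apply: val_inj; rewrite /= prednK // mulnC -xE.
by exists (Ordinal k_le); rewrite ?inE xE'.
Qed.

Lemma card_setgcd_eq :
  #|[set A : {set 'I_n} | (A != set0) && (setgcd A == g)]| = f (n %/ g).
Proof.
rewrite /f -(card_imset _ (imset_inj scale_inj)); apply: eq_card => A.
rewrite !inE; apply/idP/imsetP => [/andP [nzA /eqP gA] | [B]].
  exists (scale @^-1: A); last by rewrite scale_preimK.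
  rewrite inE -(eqn_pmul2l g_gt0) -setgcd_scale scale_preimK // muln1 gA eqxx.
  by rewrite andbT; apply: contraNneq nzA => A0; rewrite -(scale_preimK gA) A0 imset0.
rewrite inE => /andP [nzB /eqP gB] ->.
by rewrite imset_eq0 nzB setgcd_scale gB muln1 eqxx.
Qed.

End ScaleByGcd.

Lemma Mbar_by_gcd n :
  Mbar n = (\sum_(1 <= g < n.+1) coprime g n * gcdn g.-1 n * f (n %/ g))%N.
Proof.
rewrite /Mbar; set G := fun g => gcdn g.-1 n.
rewrite (eq_bigr (fun A =>
  \sum_(1 <= g < n.+1) if g == setgcd A then G g else 0))%N; last first.
  move=> A /andP [nzA _].
  rewrite -big_mkcond -big_filter filter_pred1_uniq ?iota_uniq ?big_seq1 //.
  by rewrite mem_index_iota setgcd_bounds.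
rewrite exchange_big; apply: eq_big_seq => g; rewrite mem_index_iota => /andP [g_gt0 _].
rewrite -big_mkcondr /= (eq_bigr (fun=> G g)) => [|A /andP [_ /eqP ->] //].
rewrite sum_nat_cond_const -(card_setgcd_eq n g_gt0) mulnAC; congr (_ * _)%N.
case: (boolP (coprime g n)) => [cop | ncop]; rewrite ?mul1n ?mul0n.
  apply: eq_card => A; rewrite !inE [g == _]eq_sym.
  by case: (setgcd A =P g) => [-> | _]; rewrite ?cop ?andbT ?andbF.
apply/eqP; rewrite cards_eq0; apply/eqP/setP => A; rewrite !inE.
by case: (g =P setgcd A) => [gA | _]; rewrite ?andbF // -gA (negbTE ncop) andbF.
Qed.

(* Expanding gcd(g - 1, n) by Gauss's identity and exchanging the sums:
   the weight gcd(g - 1, n) becomes a sum over the divisors d | n with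
   d | g - 1, each counted phi(d) times. *)
Lemma sum_gcdn_pred_totient n (s : seq nat) (h : nat -> int) : (0 < n)%N ->
  \sum_(g <- s) (gcdn g.-1 n)%:Z * h g =
  \sum_(d <- divisors n) (totient d)%:Z * \sum_(g <- s | (d %| g.-1)%N) h g.
Proof.
move=> n_gt0.
under eq_bigr do rewrite (@gcdn_sum_totient n _ n_gt0) -natz natr_sum big_distrl big_mkcond.
rewrite exchange_big; apply: eq_bigr => d _.
rewrite big_distrr [RHS]big_mkcond; apply: eq_bigr => g _ /=.
by case: ifP; rewrite ?mul0r ?natz.
Qed.

Lemma sum_multiples m delta (P : pred nat) (F : nat -> int) : (0 < delta)%N ->
  \sum_(1 <= j < (m %/ delta).+1 | P (delta * j)%N) F (j * delta)%N =
  \sum_(1 <= g < m.+1 | (delta %| g)%N && P g) F g.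
Proof.
move=> delta_gt0; under eq_bigr do rewrite mulnC.
rewrite -big_map -big_filter_cond; apply: perm_big; apply: uniq_perm.
- by rewrite map_inj_uniq ?iota_uniq // => a b /eqP; rewrite eqn_pmul2l // => /eqP.
- exact/filter_uniq/iota_uniq.
move=> g; rewrite mem_filter mem_index_iota; apply/mapP/idP.
  case=> j; rewrite mem_index_iota => /andP [j_gt0 j_le] ->.
  by rewrite dvdn_mulr // muln_gt0 delta_gt0 j_gt0 ltnS mulnC -leq_divRL.
case/andP => /dvdnP [j ->]; rewrite ltnS muln_gt0 => /andP [/andP [j_gt0 _] jd_le].
exists j; last by rewrite mulnC.
by rewrite mem_index_iota ltnS leq_divRL // j_gt0.
Qed.

Lemma dvdn_cong1_coprime delta d g :
  (delta %| g)%N -> (g == 1 %[mod d])%N -> coprime delta d.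
Proof.
move=> delta_g /eqP g1; apply: (coprime_dvdl delta_g).
by rewrite -coprime_modl g1 coprime_modl coprime1n.
Qed.

(* Expanding [g coprime n] by Moebius inversion: the inner sum of the
   theorem (for a fixed d) is the sum of [g coprime n] F(g) over the
   g in {1..n} with g = 1 (mod d). *)
Lemma sum_mobius_cong1 n d (F : nat -> int) : (0 < n)%N ->
  \sum_(delta <- divisors n | coprime delta d) mobius delta *
     \sum_(1 <= j < (n %/ delta).+1 | (delta * j == 1 %[mod d])%N) F (j * delta)%N
  = \sum_(1 <= g < n.+1 | (g == 1 %[mod d])%N) (coprime g n)%:Z * F g.
Proof.
move=> n_gt0.
transitivity (\sum_(delta <- divisors n) mobius delta *
    \sum_(1 <= g < n.+1 | (delta %| g)%N && (g == 1 %[mod d])%N) F g).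
  rewrite big_mkcond; apply: eq_big_seq => delta.
  rewrite -dvdn_divisors // => /(dvdn_gt0 n_gt0) delta_gt0.
  rewrite (sum_multiples n (fun g => g == 1 %[mod d])%N) //.
  case: ifP => // ncop; rewrite big1 ?mulr0 // => g /andP [delta_g g1].
  by rewrite (dvdn_cong1_coprime delta_g g1) in ncop.
under eq_bigr do rewrite big_distrr big_mkcond.
rewrite exchange_big [RHS]big_mkcond; apply: eq_bigr => g _ /=.
have [_ | _] := boolP (g == 1 %[mod d])%N; last first.
  by rewrite big1 // => delta _; rewrite andbF.
rewrite -(sum_mobius_coprime g n_gt0) big_distrl [RHS]big_mkcond /=.
by apply: eq_bigr => delta _; rewrite andbT; case: ifP; rewrite ?mul0r.
Qed.


Lemma eqn_mod1_dvd_pred g d : (0 < g)%N -> (g == 1 %[mod d])%N = (d %| g.-1)%N.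
Proof. by move=> g_gt0; rewrite eqn_mod_dvd // subn1. Qed.

Theorem mainTheorem1 (n : nat) : (0 < n)%N ->
  (Mbar n)%:Z =
  \sum_(d <- divisors n) (totient d)%:Z *
    \sum_(delta <- divisors n | coprime delta d)
       mobius delta *
       \sum_(1 <= j < (n %/ delta).+1 | (delta * j == 1 %[mod d])%N)
          (f (n %/ (j * delta)))%:Z.
Proof.
move=> n_gt0.
have Mbar_int : (Mbar n)%:Z = \sum_(1 <= g < n.+1)
    (gcdn g.-1 n)%:Z * ((coprime g n)%:Z * (f (n %/ g))%:Z).
  rewrite Mbar_by_gcd -natz natr_sum; apply: eq_bigr => g _.
  by rewrite !natrM !natz mulrAC mulrC.
rewrite Mbar_int sum_gcdn_pred_totient //; apply: eq_bigr => d _.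
rewrite (sum_mobius_cong1 d (fun g => (f (n %/ g))%:Z) n_gt0); congr (_ * _).
rewrite big_seq_cond [RHS]big_seq_cond; apply: eq_bigl => g.
by case: (boolP (g \in _)) => //; rewrite mem_index_iota => /andP [/eqn_mod1_dvd_pred ->].
Qed.
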